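(* Let $N\ge1$, $n_1,\dots,n_N\ge1$, $n=\sum_\nu n_\nu$, $m\ge1$. For $\nu=1,\dots,N$ let $Q_\nu\in\mathbb{R}^{n_\nu\times n_\nu}$ be symmetric positive definite, $c_\nu\in\mathbb{R}^{n_\nu}$, and let $X_\nu\subseteq\mathbb{R}^{n_\nu}$ be nonempty with $X=X_1\times\dots\times X_N$ convex and compact. Let $a\in\mathbb{R}^m$ with $a\ge0$ componentwise, $Q_y\in\mathbb{R}^{m\times m}$ positive definite and diagonal, and let $b,l:\mathbb{R}^n\to\mathbb{R}^m$ be differentiable and componentwise convex on $X$. Consider the Nash equilibrium problem (NEP) in which player $\nu$ solves $$\min_{x_\nu}\ \tfrac12 x_\nu^\top Q_\nu x_\nu+c_\nu^\top x_\nu+\sum_{i=1}^m a_i\max\{(Q_y^{-1}b(x))_i,\,l_i(x)\}\quad\text{s.t. } x_\nu\in X_\nu,$$ with $x=(x_\nu,x_{-\nu})$. Then this NEP has at least one Nash equilibrium. Consequently, the multi-leader-follower game described in the context has at least one Nash equilibrium.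
   Context: Notation: $x=(x_1,\dots,x_N)\in\mathbb{R}^n$ with $x_\nu\in\mathbb{R}^{n_\nu}$, and $x_{-\nu}$ denotes the vector of all $x_i$, $i\ne\nu$. The multi-leader-follower game (MLFG): given the leaders' strategies $x$, the follower solves $\min_{y\in\mathbb{R}^m}\tfrac12 y^\top Q_y y-b(x)^\top y$ s.t. $y\ge l(x)$; its unique solution (best response) is $y(x)=\max\{Q_y^{-1}b(x),l(x)\}$ (componentwise). Leader $\nu$ solves $\min_{x_\nu\in X_\nu}\theta_\nu(x_\nu,x_{-\nu})=\tfrac12 x_\nu^\top Q_\nu x_\nu+c_\nu^\top x_\nu+a^\top y(x)$. A Nash equilibrium (of the NEP or the MLFG) is a point $x^*\in X$ such that for every $\nu$, $x^*_\nu$ minimizes player $\nu$'s objective over $X_\nu$ with $x_{-\nu}=x^*_{-\nu}$ fixed. *)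

From HB Require Import structures.
From mathcomp Require Import all_boot all_order all_algebra.
From mathcomp Require Import all_classical all_reals all_analysis.
Set Implicit Arguments. Unset Strict Implicit. Unset Printing Implicit Defensive.
Import Order.TTheory GRing.Theory Num.Theory.
Import numFieldNormedType.Exports numFieldTopology.Exports.
Local Open Scope ring_scope.
Local Open Scope classical_set_scope.

(* Leaders' strategy x = (x_1,...,x_N) is a row vector of size
   n = \sum_nu d nu; block nu (x_nu) is [submxrow x nu : 'rV_(d nu)]. *)

Definition sym_mx (R : realType) k (Q : 'M[R]_k) := Q^T = Q.
Definition posdef_mx (R : realType) k (Q : 'M[R]_k) :=
  forall v : 'rV[R]_k, v != 0 -> 0 < (v *m Q *m v^T) 0 0.

Definition convex_set_of (R : realType) k (A : set 'rV[R]_k) :=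
  forall x y (t : R), A x -> A y -> 0 <= t <= 1 ->
    A (t *: x + (1 - t) *: y).

Definition convex_fun_on (R : realType) k (A : set 'rV[R]_k) (f : 'rV[R]_k -> R) :=
  forall x y (t : R), A x -> A y -> 0 <= t <= 1 ->
    f (t *: x + (1 - t) *: y) <= t * f x + (1 - t) * f y.

Definition prodset (R : realType) N (d : 'I_N -> nat)
  (Xs : forall nu : 'I_N, set 'rV[R]_(d nu)) : set 'rV[R]_(\sum_(nu < N) d nu) :=
  [set x | forall nu, Xs nu (submxrow x nu)].

Definition is_nash (R : realType) N (d : 'I_N -> nat)
  (Xs : forall nu : 'I_N, set 'rV[R]_(d nu))
  (theta : 'I_N -> 'rV[R]_(\sum_(nu < N) d nu) -> R)
  (xs : 'rV[R]_(\sum_(nu < N) d nu)) :=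
  prodset Xs xs /\
  forall nu (z : 'rV[R]_(\sum_(nu < N) d nu)),
    Xs nu (submxrow z nu) ->
    (forall j, j != nu -> submxrow z j = submxrow xs j) ->
    theta nu xs <= theta nu z.

Definition nep_obj (R : realType) N (d : 'I_N -> nat) m
  (Q : forall nu : 'I_N, 'M[R]_(d nu)) (c : forall nu : 'I_N, 'cV[R]_(d nu))
  (a : 'cV[R]_m) (Qy : 'M[R]_m) (b l : 'rV[R]_(\sum_(nu < N) d nu) -> 'cV[R]_m)
  (nu : 'I_N) (x : 'rV[R]_(\sum_(nu < N) d nu)) : R :=
  2^-1 * (submxrow x nu *m Q nu *m (submxrow x nu)^T) 0 0
  + (submxrow x nu *m c nu) 0 0
  + \sum_(i < m) a i 0 * Num.max ((invmx Qy *m b x) i 0) (l x i 0).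

Definition follower_br (R : realType) n m (Qy : 'M[R]_m)
  (b l : 'rV[R]_n -> 'cV[R]_m) (x : 'rV[R]_n) : 'cV[R]_m :=
  \col_i Num.max ((invmx Qy *m b x) i 0) (l x i 0).

Definition mlfg_obj (R : realType) N (d : 'I_N -> nat) m
  (Q : forall nu : 'I_N, 'M[R]_(d nu)) (c : forall nu : 'I_N, 'cV[R]_(d nu))
  (a : 'cV[R]_m) (Qy : 'M[R]_m) (b l : 'rV[R]_(\sum_(nu < N) d nu) -> 'cV[R]_m)
  (nu : 'I_N) (x : 'rV[R]_(\sum_(nu < N) d nu)) : R :=
  2^-1 * (submxrow x nu *m Q nu *m (submxrow x nu)^T) 0 0
  + (submxrow x nu *m c nu) 0 0
  + (a^T *m follower_br Qy b l x) 0 0.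

From HB Require Import structures.
From mathcomp Require Import all_boot all_order all_algebra.
From mathcomp Require Import all_classical all_reals all_analysis.
From mathcomp Require Import lra.
Import Order.TTheory GRing.Theory Num.Theory.
Import numFieldNormedType.Exports numFieldTopology.Exports.
Local Open Scope ring_scope.
Local Open Scope classical_set_scope.

(* The NEP and MLFG objectives coincide, since
   a^T y(x) = sum_i a_i max{(Qy^-1 b(x))_i, l_i(x)}, and both are of the form
   theta_nu(x) = f_nu(x_nu) + g(x).  Such a game is an exact potential game
   with potential P(x) = sum_nu f_nu(x_nu) + g(x): a unilateral deviation of
   player nu changes theta_nu and P by the same amount.  Hence a minimiser of P
   over X, which exists because P is continuous and X is compact and nonempty,
   is a Nash equilibrium. *)

Section PotentialGame.
Context {R : realType} {N : nat} {d : 'I_N -> nat}.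
Local Notation strategy := 'rV[R]_(\sum_(nu < N) d nu).
Context {Xs : forall nu : 'I_N, set 'rV[R]_(d nu)}.

Definition agree_off (nu : 'I_N) (x z : strategy) :=
  forall j, j != nu -> submxrow z j = submxrow x j.

Definition exact_potential (theta : 'I_N -> strategy -> R) (P : strategy -> R) :=
  forall nu x z, agree_off nu x z -> theta nu z - theta nu x = P z - P x.

Lemma prodset_agree_off {nu : 'I_N} {x z : strategy} :
  prodset Xs x -> Xs nu (submxrow z nu) -> agree_off nu x z -> prodset Xs z.
Proof. by move=> Xx Xz xz j; case: (eqVneq j nu) => [->//|/xz ->]. Qed.

Lemma prodset_neq0 : (forall nu, Xs nu !=set0) -> prodset Xs !=set0.
Proof.
move=> Xsne; exists (\mxrow_nu xget 0 (Xs nu)) => nu; rewrite mxrowK.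
by case: xgetP => // /(_ _) notX; case: (Xsne nu) => v /notX.
Qed.

Lemma potential_argmin_is_nash {theta P xs} :
  exact_potential theta P -> prodset Xs xs ->
  (forall z, prodset Xs z -> P xs <= P z) -> is_nash Xs theta xs.
Proof.
move=> potP Xxs xsmin; split=> // nu z Xz xsz.
rewrite -subr_ge0 (potP nu xs z xsz) subr_ge0.
exact/xsmin/(prodset_agree_off Xxs Xz).
Qed.

Lemma nash_exists_of_potential {theta P} :
  (forall nu, Xs nu !=set0) -> compact (prodset Xs) ->
  {within prodset Xs, continuous P} -> exact_potential theta P ->
  exists xs, is_nash Xs theta xs.
Proof.
move=> Xsne Xcpt Pcont potP.
have [xs /set_mem Xxs xsmin] := EVT_min_rV (prodset_neq0 Xsne) Xcpt Pcont.
exists xs; apply: potential_argmin_is_nash potP Xxs _ => z Xz.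
exact/xsmin/mem_set.
Qed.

Lemma separable_exact_potential (f : forall nu, 'rV[R]_(d nu) -> R)
    (g : strategy -> R) :
  exact_potential (fun nu x => f nu (submxrow x nu) + g x)
                  (fun x => \sum_nu f nu (submxrow x nu) + g x).
Proof.
move=> nu x z xz; rewrite (bigD1 nu) // [in X in _ = _ - X](bigD1 nu) //=.
rewrite (eq_bigr (fun j => f j (submxrow x j))) => [|j /xz -> //].
lra.
Qed.

End PotentialGame.

Section EntrywiseContinuity.
Context {R : realType} {T : topologicalType} {x : T}.

Definition continuous_entries {p q} (h : T -> 'M[R]_(p, q)) :=
  forall i j, {for x, continuous (fun z => h z i j)}.

Lemma continuous_sum {I : Type} {r : seq I} {F : I -> T -> R} :
  (forall i, {for x, continuous (F i)}) ->
  {for x, continuous (fun z => \sum_(i <- r) F i z)}.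
Proof.
move=> Fcont; rewrite -fct_sumE.
by apply: (big_ind (fun f : T -> R => {for x, continuous f})) => //;
  [exact: cvg_cst | move=> f g; exact: continuousD].
Qed.

Lemma continuous_entriesW {p q} {h : T -> 'M[R]_(p, q)} :
  {for x, continuous h} -> continuous_entries h.
Proof.
by move=> hcont i j; exact: continuous_comp hcont (@coord_continuous R p q i j (h x)).
Qed.

Lemma continuous_entries_cst {p q} (A : 'M[R]_(p, q)) :
  continuous_entries (fun=> A).
Proof. by move=> i j; exact: cvg_cst. Qed.

Lemma continuous_entries_tr {p q} {h : T -> 'M[R]_(p, q)} :
  continuous_entries h -> continuous_entries (fun z => (h z)^T).
Proof.
move=> hcont i j; rewrite (_ : (fun z => _) = fun z => h z j i) //.
by apply/funext => z; rewrite mxE.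
Qed.

Lemma continuous_entries_colsub {p q q'} {s : 'I_q' -> 'I_q} {h : T -> 'M[R]_(p, q)} :
  continuous_entries h -> continuous_entries (fun z => colsub s (h z)).
Proof.
move=> hcont i j; rewrite (_ : (fun z => _) = fun z => h z i (s j)) //.
by apply/funext => z; rewrite mxE.
Qed.

Lemma continuous_entries_mul {p q r} {h : T -> 'M[R]_(p, q)} {k : T -> 'M[R]_(q, r)} :
  continuous_entries h -> continuous_entries k ->
  continuous_entries (fun z => h z *m k z).
Proof.
move=> hcont kcont i j.
rewrite (_ : (fun z => _) = fun z => \sum_l h z i l * k z l j).
  by apply: continuous_sum => l; exact: continuousM.
by apply/funext => z; rewrite mxE.
Qed.

Lemma continuous_leader_cost {n} (Q : 'M[R]_n) (c : 'cV[R]_n) {h : T -> 'rV[R]_n} :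
  continuous_entries h ->
  {for x, continuous (fun z => 2^-1 * (h z *m Q *m (h z)^T) 0 0 + (h z *m c) 0 0)}.
Proof.
move=> hcont; apply: continuousD; last first.
  exact: continuous_entries_mul hcont (continuous_entries_cst _) 0 0.
apply: continuousM; first exact: cvg_cst.
apply: (continuous_entries_mul _ (continuous_entries_tr hcont) 0 0).
exact: continuous_entries_mul hcont (continuous_entries_cst _).
Qed.

Lemma continuous_follower_cost {m n} (a : 'cV[R]_m) (Qy : 'M[R]_m)
    (b l : 'rV[R]_n -> 'cV[R]_m) {h : T -> 'rV[R]_n} :
  {for h x, continuous b} -> {for h x, continuous l} -> {for x, continuous h} ->
  {for x, continuous (fun z => (a^T *m follower_br Qy b l (h z)) 0 0)}.
Proof.
move=> bcont lcont hcont.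
have bhcont := continuous_entriesW (continuous_comp hcont bcont).
have lhcont := continuous_entriesW (continuous_comp hcont lcont).
apply: (continuous_entries_mul (continuous_entries_cst _) _ 0 0) => i j.
rewrite (_ : (fun z => _) =
  fun z => Num.max ((invmx Qy *m b (h z)) i 0) (l (h z) i 0)).
  apply: continuous_max; last exact: lhcont.
  exact: continuous_entries_mul (continuous_entries_cst _) bhcont i 0.
by apply/funext => z; rewrite !mxE.
Qed.

End EntrywiseContinuity.

Lemma nep_objE {R : realType} {N} {d : 'I_N -> nat} {m}
    (Q : forall nu : 'I_N, 'M[R]_(d nu)) (c : forall nu : 'I_N, 'cV[R]_(d nu))
    (a : 'cV[R]_m) (Qy : 'M[R]_m) (b l : 'rV[R]_(\sum_(nu < N) d nu) -> 'cV[R]_m) :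
  nep_obj Q c a Qy b l = mlfg_obj Q c a Qy b l.
Proof.
apply/funext => nu; apply/funext => x; rewrite /mlfg_obj /nep_obj.
by congr (_ + _); rewrite mxE; apply: eq_bigr => i _; rewrite !mxE.
Qed.

Theorem mainTheorem2 (R : realType) (N : nat) (d : 'I_N -> nat) (m : nat)
  (Q : forall nu : 'I_N, 'M[R]_(d nu)) (c : forall nu : 'I_N, 'cV[R]_(d nu))
  (Xs : forall nu : 'I_N, set 'rV[R]_(d nu))
  (a : 'cV[R]_m) (Qy : 'M[R]_m)
  (b l : 'rV[R]_(\sum_(nu < N) d nu) -> 'cV[R]_m) :
  (0 < N)%N -> (forall nu, 0 < d nu)%N -> (0 < m)%N ->
  (forall nu, sym_mx (Q nu) /\ posdef_mx (Q nu)) ->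
  (forall nu, Xs nu !=set0) ->
  convex_set_of (prodset Xs) -> compact (prodset Xs) ->
  (forall i, 0 <= a i 0) ->
  posdef_mx Qy -> is_diag_mx Qy ->
  (forall x, prodset Xs x -> differentiable b x /\ differentiable l x) ->
  (forall i, convex_fun_on (prodset Xs) (fun x => b x i 0)) ->
  (forall i, convex_fun_on (prodset Xs) (fun x => l x i 0)) ->
  (exists xs, is_nash Xs (nep_obj Q c a Qy b l) xs) /\
  (exists xs, is_nash Xs (mlfg_obj Q c a Qy b l) xs).
Proof.
move=> _ _ _ _ Xsne _ Xcpt _ _ _ bl_diff _ _.
pose leader_cost nu (v : 'rV[R]_(d nu)) :=
  2^-1 * (v *m Q nu *m v^T) 0 0 + (v *m c nu) 0 0.
pose follower_cost x := (a^T *m follower_br Qy b l x) 0 0.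
pose P x := \sum_nu leader_cost nu (submxrow x nu) + follower_cost x.
have potential : exact_potential (mlfg_obj Q c a Qy b l) P.
  exact: separable_exact_potential.
have Pcont : {within prodset Xs, continuous P}.
  apply: continuous_in_subspaceT => x /set_mem /bl_diff[bdiff ldiff].
  apply: continuousD; last first.
    by apply: continuous_follower_cost; exact: differentiable_continuous.
  apply: continuous_sum => nu; apply: continuous_leader_cost.
  exact/continuous_entries_colsub/continuous_entriesW.
have [xs xs_nash] := nash_exists_of_potential Xsne Xcpt Pcont potential.
by rewrite nep_objE; split; exists xs.
Qed.
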